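(* For any valid scheme (satisfying (C1)–(C8)) with $N\ge1$, $K\ge2$, and any $k\in\{2,\dots,K\}$, letting $\mathcal{R}_U'$ be the user-side common randomness provided by the user privacy constraint (C6) for the message indices $k-1$ and $k$, \[ I\big(W_{k:K};Q_{1:N}^{[k-1,\mathcal{R}_U]},A_{1:N}^{[k-1,\mathcal{R}_U]},\mathcal{R}_S\,\big|\,W_{1:k-1}\big)\ \ge\ \frac1N\, I\big(W_{k+1:K};Q_{1:N}^{[k,\mathcal{R}_U']},A_{1:N}^{[k,\mathcal{R}_U']},\mathcal{R}_S\,\big|\,W_{1:k}\big)+\frac{L}{N}, \] where $W_{K+1:K}$ is empty (so the mutual information term is $0$ when $k=K$).
   Context: Model (SPIR with user-side common randomness). There are $N\ge1$ non-colluding databases, each storing the same $K\ge2$ messages $W_1,\dots,W_K$. Each message consists of $L$ i.i.d. symbols uniform over a sufficiently large finite field $\mathbb{F}_q$; entropies are in $q$-ary units, so $H(W_k)=L$ and $H(W_{1:K})=KL$. The databases share server-side common randomness $\mathcal{R}_S$, unknown to the user. The user holds user-side common randomness $\mathcal{R}_U$, a subset of the components of $\mathcal{R}_S$, unknown to the databases except for its size (uniform over subsets of given cardinality). $\mathcal{F}$ is the user's retrieval-strategy randomness. To retrieve $W_k$ the user sends $Q_n^{[k,\mathcal{R}_U]}$ to database $n$, receiving $A_n^{[k,\mathcal{R}_U]}$; $W_{\bar k}=\{W_j:j\ne k\}$. A valid scheme satisfies for all $k,n,\mathcal{R}_U$: (C1) $I(W_{1:K};k,\mathcal{F},\mathcal{R}_S,\mathcal{R}_U)=0$;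 (C2) $I(Q_{1:N}^{[k,\mathcal{R}_U]};W_{1:K},\mathcal{R}_S\setminus\mathcal{R}_U)=0$; (C3) $H(Q_{1:N}^{[k,\mathcal{R}_U]}\mid\mathcal{F})=0$; (C4) $H(A_n^{[k,\mathcal{R}_U]}\mid Q_n^{[k,\mathcal{R}_U]},W_{1:K},\mathcal{R}_S)=0$; (C5) $H(W_k\mid\mathcal{F},A_{1:N}^{[k,\mathcal{R}_U]},\mathcal{R}_U)=0$; (C6) user privacy: for all $k,k',n,\mathcal{R}_U$ there is $\mathcal{R}_U'$ with $H(\mathcal{R}_U')=H(\mathcal{R}_U)$ and $(Q_n^{[k,\mathcal{R}_U]},A_n^{[k,\mathcal{R}_U]},W_{1:K},\mathcal{R}_S)\sim(Q_n^{[k',\mathcal{R}_U']},A_n^{[k',\mathcal{R}_U']},W_{1:K},\mathcal{R}_S)$; (C7) $I(W_{\bar k};\mathcal{F},A_{1:N}^{[k,\mathcal{R}_U]},\mathcal{R}_U)=0$; (C8) $I(\mathcal{R}_S\setminus\mathcal{R}_U;\mathcal{F},A_{1:N}^{[k,\mathcal{R}_U]},W_k,\mathcal{R}_U)=0$. *)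

From HB Require Import structures.
From mathcomp Require Import all_boot all_order all_algebra all_field.
From mathcomp Require Import reals exp.
Set Implicit Arguments. Unset Strict Implicit. Unset Printing Implicit Defensive.
Import Order.TTheory GRing.Theory Num.Theory.
Local Open Scope ring_scope.

Section InfoTheory.
Variables (R : realType) (Omega : finType) (P : {ffun Omega -> R}).

Definition is_dist : Prop := (forall w, 0 <= P w) /\ \sum_w P w = 1.

Definition pr (T : finType) (X : Omega -> T) (y : T) : R :=
  \sum_(w | X w == y) P w.

Definition jointRV (T U : finType) (X : Omega -> T) (Y : Omega -> U) :
  Omega -> T * U := fun w => (X w, Y w).

Variable q : nat.

Definition ent (T : finType) (X : Omega -> T) : R :=
  - (\sum_(y : T) pr X y * ln (pr X y)) / ln q%:R.

Definition cent (T U : finType) (X : Omega -> T) (Y : Omega -> U) : R :=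
  ent (jointRV X Y) - ent Y.

Definition mi (T U : finType) (X : Omega -> T) (Y : Omega -> U) : R :=
  ent X + ent Y - ent (jointRV X Y).

Definition cmi (T U V : finType) (X : Omega -> T) (Y : Omega -> U)
  (Z : Omega -> V) : R :=
  ent (jointRV X Z) + ent (jointRV Y Z) - ent (jointRV (jointRV X Y) Z) - ent Z.

End InfoTheory.

Section SPIR.
Variables (Omega : finType) (Fq : finFieldType) (S : finType)
          (K L N M : nat).

Definition msgT := {ffun 'I_L -> Fq}.

(* Messages are indexed 1..K (W k for k = 1..K; other indices unused). *)
Variable W : nat -> Omega -> msgT.

(* W_{lo:hi} = (W_j)_{lo <= j <= hi}, encoded as a K-tuple with None outside
   the range (an injective re-encoding of the sub-tuple). *)
Definition Wsub (lo hi : nat) : Omega -> {ffun 'I_K -> option msgT} :=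
  fun w => [ffun i : 'I_K => if (lo <= i.+1 <= hi)%N then Some (W i.+1 w) else None].

Definition Wall : Omega -> {ffun 'I_K -> msgT} :=
  fun w => [ffun i : 'I_K => W i.+1 w].

Definition Wbar (k : nat) : Omega -> {ffun 'I_K -> option msgT} :=
  fun w => [ffun i : 'I_K => if i.+1 != k then Some (W i.+1 w) else None].

Variable RS : Omega -> {ffun 'I_M -> S}.

(* user-side common randomness R_U = components of R_S indexed by T *)
Definition RU (T : {set 'I_M}) : Omega -> {ffun 'I_M -> option S} :=
  fun w => [ffun i => if i \in T then Some (RS w i) else None].

Definition RSminus (T : {set 'I_M}) : Omega -> {ffun 'I_M -> option S} :=
  fun w => [ffun i => if i \notin T then Some (RS w i) else None].

Variables (QT AT FT : finType).
Variable Fr : Omega -> FT.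
(* Q k T n : query to database n for message k with user randomness R_U(T) *)
Variable Q : nat -> {set 'I_M} -> 'I_N -> Omega -> QT.
Variable A : nat -> {set 'I_M} -> 'I_N -> Omega -> AT.

Definition Qall (k : nat) (T : {set 'I_M}) : Omega -> {ffun 'I_N -> QT} :=
  fun w => [ffun n => Q k T n w].
Definition Aall (k : nat) (T : {set 'I_M}) : Omega -> {ffun 'I_N -> AT} :=
  fun w => [ffun n => A k T n w].

Variables (R : realType) (P : {ffun Omega -> R}).
Variable m : nat.

Let q := #|Fq|.
Let H (T : finType) (X : Omega -> T) := ent P q X.
Let I (T U : finType) (X : Omega -> T) (Y : Omega -> U) := mi P q X Y.

Definition valid_scheme : Prop :=
  is_dist P /\
   (forall x, pr P Wall x = 1 / (q ^ (K * L))%:R) /\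
   (forall T : {set 'I_M}, #|T| = m ->
      I Wall (jointRV (jointRV Fr RS) (RU T)) = 0) /\
   (forall k (T : {set 'I_M}), (1 <= k <= K)%N -> #|T| = m ->
      I (Qall k T) (jointRV Wall (RSminus T)) = 0) /\
   (forall k (T : {set 'I_M}), (1 <= k <= K)%N -> #|T| = m ->
      cent P q (Qall k T) Fr = 0) /\
   (forall k (T : {set 'I_M}) n, (1 <= k <= K)%N -> #|T| = m ->
      cent P q (A k T n) (jointRV (jointRV (Q k T n) Wall) RS) = 0) /\
   (forall k (T : {set 'I_M}), (1 <= k <= K)%N -> #|T| = m ->
      cent P q (W k) (jointRV (jointRV Fr (Aall k T)) (RU T)) = 0) /\
   (* (C6) user privacy *)
   (forall k k' n (T : {set 'I_M}), (1 <= k <= K)%N -> (1 <= k' <= K)%N -> #|T| = m ->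
      exists T' : {set 'I_M}, [/\ #|T'| = m, H (RU T') = H (RU T) &
        forall x, pr P (jointRV (jointRV (jointRV (Q k T n) (A k T n)) Wall) RS) x
                = pr P (jointRV (jointRV (jointRV (Q k' T' n) (A k' T' n)) Wall) RS) x]) /\
   (forall k (T : {set 'I_M}), (1 <= k <= K)%N -> #|T| = m ->
      I (Wbar k) (jointRV (jointRV Fr (Aall k T)) (RU T)) = 0) /\
   (forall k (T : {set 'I_M}), (1 <= k <= K)%N -> #|T| = m ->
      I (RSminus T) (jointRV (jointRV (jointRV Fr (Aall k T)) (W k)) (RU T)) = 0).

End SPIR.

From Pilot Require Import Defs.
From HB Require Import structures.
From mathcomp Require Import all_boot all_order all_algebra all_field.
From mathcomp Require Import reals exp.
From mathcomp Require Import ring lra zify.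
Set Implicit Arguments. Unset Strict Implicit. Unset Printing Implicit Defensive.
Import Order.TTheory GRing.Theory Num.Theory.
Local Open Scope ring_scope.

(* With Wl = W_{1:k-1}, Wh = W_{k:K} and Y_j = (Q_{1:N}, A_{1:N}, R_S) the
   transcript of the retrieval of message j, the proof is the chain
     N I(Wh; Y_{k-1} | Wl) >= sum_n I(Wh; Q_n, A_n, R_S | Wl)  (retrieval k-1)
                            = sum_n I(Wh; Q_n, A_n, R_S | Wl)  (retrieval k, (C6))
                           >= sum_n H(A_n | Q_{1:N}, R_S, Wl)
                           >= H(A_{1:N} | Q_{1:N}, R_S, Wl) >= I(Wh; Y_k | Wl)
                            = I(W_k; Y_k | Wl) + I(W_{k+1:K}; Y_k | W_{1:k}),
   where I(W_k; Y_k | Wl) >= L since the messages are uniform and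
   H(W_k | Y_k) = 0 (decodability (C5); by (C1), (C3), (C4) the strategy is
   useless given Y_k). *)

(* [determines P X Y]: almost surely Y is a function of X, i.e. Y agrees at
   any two sample points of positive probability at which X agrees. *)
Definition determines (R : realType) (Omega : finType) (P : {ffun Omega -> R})
    (T U : finType) (X : Omega -> T) (Y : Omega -> U) : Prop :=
  forall w w', P w != 0 -> P w' != 0 -> X w = X w' -> Y w = Y w'.

Section Determination.
Variables (R : realType) (Omega : finType) (P : {ffun Omega -> R}).
Implicit Types T U V : finType.

Lemma determines_refl T (X : Omega -> T) : determines P X X.
Proof. by move=> w w' _ _. Qed.

Lemma determines_trans T U V (X : Omega -> T) (Y : Omega -> U) (Z : Omega -> V) :
  determines P X Y -> determines P Y Z -> determines P X Z.
Proof. by move=> dXY dYZ w w' Pw Pw' e; apply: dYZ => //; apply: dXY. Qed.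

Lemma determines_fst T U (X : Omega -> T) (Y : Omega -> U) :
  determines P (jointRV X Y) X.
Proof. by move=> w w' _ _ [e _]. Qed.

Lemma determines_snd T U (X : Omega -> T) (Y : Omega -> U) :
  determines P (jointRV X Y) Y.
Proof. by move=> w w' _ _ [_ e]. Qed.

Lemma determines_pair T U V (X : Omega -> T) (Y : Omega -> U) (Z : Omega -> V) :
  determines P X Y -> determines P X Z -> determines P X (jointRV Y Z).
Proof. by move=> dY dZ w w' Pw Pw' e; rewrite /jointRV (dY w w') ?(dZ w w'). Qed.

Lemma determines_const T (X : Omega -> T) : determines P X (fun _ => tt).
Proof. by []. Qed.

End Determination.

(* Proves [determines P X Y] when Y is a tuple of components of X, or of
   variables that hypotheses of the context show to be determined by them. *)
Ltac determined_fuel n :=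
  lazymatch n with
  | O => fail
  | S ?m =>
    match goal with
    | |- determines _ _ (fun _ => tt) => exact: determines_const
    | |- determines _ _ (jointRV _ _) => apply: determines_pair; determined_fuel n
    | |- determines _ ?X ?X => exact: determines_refl
    | |- determines _ (jointRV ?X1 ?X2) _ =>
        apply: (determines_trans (determines_fst (X := X1) (Y := X2)));
        determined_fuel m
    | |- determines _ (jointRV ?X1 ?X2) _ =>
        apply: (determines_trans (determines_snd (X := X1) (Y := X2)));
        determined_fuel m
    | h : determines _ _ _ |- _ => apply: (determines_trans _ h); determined_fuel m
    end
  end.
Ltac determined := determined_fuel 5%nat.

Section Entropy.
Variables (R : realType) (Omega : finType) (P : {ffun Omega -> R}) (q : nat).
Hypotheses (P_ge0 : forall w, 0 <= P w) (P_sum1 : \sum_w P w = 1).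
Hypothesis q_gt1 : (1 < q)%N.
Implicit Types T U V : finType.

Local Notation H := (ent P q).
Local Notation pr := (pr P).

Lemma ln_le_subr1 (x : R) : 0 < x -> ln x <= x - 1.
Proof.
move=> x_gt0; have := @le_ln1Dx R (x - 1).
have -> : 1 + (x - 1) = x by rewrite addrC subrK.
by apply; rewrite ltrBrDr addNr.
Qed.

Lemma lnq_gt0 : 0 < ln (q%:R : R).
Proof. by apply: ln_gt0; rewrite ltr1n. Qed.

Lemma expect_pr T (X : Omega -> T) (F : T -> R) :
  \sum_w P w * F (X w) = \sum_y pr X y * F y.
Proof.
rewrite (partition_big X predT) //=; apply: eq_bigr => y _.
by rewrite /Defs.pr big_distrl /=; apply: eq_bigr => w /eqP <-.
Qed.

Lemma ent_expect T (X : Omega -> T) :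
  H X = - (\sum_w P w * ln (pr X (X w))) / ln q%:R.
Proof. by rewrite /ent (expect_pr X (fun y => ln (pr X y))). Qed.

Lemma pr_ge0 T (X : Omega -> T) y : 0 <= pr X y.
Proof. exact: sumr_ge0. Qed.

Lemma pr_sum1 T (X : Omega -> T) : \sum_y pr X y = 1.
Proof.
transitivity (\sum_y pr X y * 1); first by apply: eq_bigr => y _; rewrite mulr1.
by rewrite -(expect_pr X (fun _ => 1)); under eq_bigr do rewrite mulr1.
Qed.

Lemma pr_marginal T V (X : Omega -> T) (Z : Omega -> V) z :
  \sum_x pr (jointRV X Z) (x, z) = pr Z z.
Proof.
rewrite [RHS]/Defs.pr (partition_big X predT) //=.
apply: eq_bigr => x _; apply: eq_bigl => w.
by rewrite /jointRV xpair_eqE andbC.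
Qed.

Lemma pr_gt0 T (X : Omega -> T) w : P w != 0 -> 0 < pr X (X w).
Proof.
move=> Pw; apply: (@lt_le_trans _ _ (P w)); first by rewrite lt_def Pw P_ge0.
by rewrite /Defs.pr (bigD1 w) //= lerDl; apply: sumr_ge0.
Qed.

Lemma pr_support T (X : Omega -> T) y :
  pr X y = \sum_(w | (X w == y) && (P w != 0)) P w.
Proof.
rewrite /Defs.pr (bigID (fun w => P w != 0)) /= [X in _ + X]big1 ?addr0 //.
by move=> w /andP [_]; rewrite negbK => /eqP.
Qed.

Lemma ent_equiv T U (X : Omega -> T) (Y : Omega -> U) :
  determines P X Y -> determines P Y X -> H X = H Y.
Proof.
move=> dXY dYX; rewrite !ent_expect; congr (- _ / _); apply: eq_bigr => w _.
have [->|Pw] := eqVneq (P w) 0; first by rewrite !mul0r.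
congr (_ * ln _); rewrite !pr_support; apply: eq_bigl => w'.
by apply/andP/andP => -[/eqP e Pw']; split => //; apply/eqP;
  [apply: dXY | apply: dYX].
Qed.

Lemma ent_unit : H (fun _ : Omega => tt) = 0.
Proof.
rewrite ent_expect (_ : pr (fun _ : Omega => tt) tt = 1) ?ln1; last first.
  by rewrite /Defs.pr -P_sum1.
by rewrite big1 ?oppr0 ?mul0r // => w _; rewrite mulr0.
Qed.

Lemma ent_constant T (X : Omega -> T) : (forall w w', X w = X w') -> H X = 0.
Proof.
by move=> cX; rewrite -ent_unit; apply: ent_equiv => // w w' _ _ _; apply: cX.
Qed.

(* The core of Gibbs' inequality for conditional mutual information: the
   expectation of p(x,z) p(y,z) / (p(x,y,z) p(z)) is at most 1. *)
Lemma cmi_ratio_le1 T U V (X : Omega -> T) (Y : Omega -> U) (Z : Omega -> V) :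
  \sum_w P w * (pr (jointRV X Z) (jointRV X Z w) * pr (jointRV Y Z) (jointRV Y Z w)
    / (pr (jointRV (jointRV X Y) Z) (jointRV (jointRV X Y) Z w) * pr Z (Z w))) <= 1.
Proof.
set XZ := jointRV X Z; set YZ := jointRV Y Z; set XYZ := jointRV (jointRV X Y) Z.
pose G (v : (T * U) * V) := pr XZ (v.1.1, v.2) * pr YZ (v.1.2, v.2) /
                             (pr XYZ v * pr Z v.2).
pose G2 (v : (T * U) * V) := pr XZ (v.1.1, v.2) * (pr YZ (v.1.2, v.2) / pr Z v.2).
rewrite (expect_pr XYZ G); apply: (@le_trans _ _ (\sum_v G2 v)).
  apply: ler_sum => v _; rewrite /G /G2.
  have [->|pv] := eqVneq (pr XYZ v) 0.
    by rewrite mul0r mulr_ge0 ?divr_ge0 ?pr_ge0.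
  have [->|pz] := eqVneq (pr Z v.2) 0; first by rewrite !(mulr0, invr0, mul0r).
  suff -> : pr XYZ v * (pr XZ (v.1.1, v.2) * pr YZ (v.1.2, v.2) / (pr XYZ v * pr Z v.2))
           = pr XZ (v.1.1, v.2) * (pr YZ (v.1.2, v.2) / pr Z v.2) by [].
  by field; rewrite pv pz.
rewrite -(pair_bigA _ (fun a z => G2 (a, z))) /=.
rewrite -(pair_bigA _ (fun x y => \sum_z G2 ((x, y), z))) /=.
under eq_bigr => x _ do rewrite exchange_big /=.
rewrite exchange_big /= -(pr_sum1 Z) ler_sum // => z _; rewrite /G2 /=.
under eq_bigr => x _ do rewrite -mulr_sumr -mulr_suml pr_marginal.
rewrite -mulr_suml pr_marginal.
by have [->|pz] := eqVneq (pr Z z) 0; rewrite ?mul0r // mulfV // mulr1.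
Qed.

Lemma cmi_ge0 T U V (X : Omega -> T) (Y : Omega -> U) (Z : Omega -> V) :
  0 <= cmi P q X Y Z.
Proof.
rewrite /cmi !ent_expect.
set XZ := jointRV X Z; set YZ := jointRV Y Z; set XYZ := jointRV (jointRV X Y) Z.
set F := fun w => pr XZ (XZ w) * pr YZ (YZ w) / (pr XYZ (XYZ w) * pr Z (Z w)).
set s1 := \sum_w _ * ln (pr XZ _); set s2 := \sum_w _ * ln (pr YZ _).
set s3 := \sum_w _ * ln (pr XYZ _); set s4 := \sum_w _ * ln (pr Z _).
have -> : - s1 / ln q%:R + - s2 / ln q%:R - - s3 / ln q%:R - - s4 / ln q%:R
   = (s3 + s4 - s1 - s2) / ln q%:R by ring.
apply: divr_ge0; last exact: ltW lnq_gt0.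
have gibbs : \sum_w P w * (1 - F w) <= s3 + s4 - s1 - s2.
  rewrite /s1 /s2 /s3 /s4 -big_split -!sumrB /= ler_sum // => w _.
  have [->|Pw] := eqVneq (P w) 0; first by rewrite !mul0r !subr0 addr0.
  set a := pr XZ _; set b := pr YZ _; set c := pr XYZ _; set d := pr Z _.
  have -> : P w * ln c + P w * ln d - P w * ln a - P w * ln b =
            P w * (ln c + ln d - ln a - ln b) by ring.
  rewrite ler_pM2l ?lt_def ?Pw ?P_ge0 //.
  have a0 := pr_gt0 XZ Pw; have b0 := pr_gt0 YZ Pw.
  have c0 := pr_gt0 XYZ Pw; have d0 := pr_gt0 Z Pw.
  have := @ln_le_subr1 (F w); rewrite /F.
  rewrite ln_div ?lnM ?posrE ?mulr_gt0 ?divr_gt0 ?invr_gt0 ?mulr_gt0 //.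
  by move=> /(_ isT); lra.
apply: le_trans gibbs; under eq_bigr => w _ do rewrite mulrBr mulr1.
by rewrite sumrB P_sum1 subr_ge0; exact: cmi_ratio_le1.
Qed.

Lemma mi_cmi T U (X : Omega -> T) (Y : Omega -> U) :
  mi P q X Y = cmi P q X Y (fun _ => tt).
Proof.
have drop_unit V (Z : Omega -> V) : H (jointRV Z (fun _ => tt)) = H Z.
  by apply: ent_equiv; determined.
by rewrite /mi /cmi ent_unit subr0 !drop_unit.
Qed.

Lemma mi_ge0 T U (X : Omega -> T) (Y : Omega -> U) : 0 <= mi P q X Y.
Proof. by rewrite mi_cmi cmi_ge0. Qed.

Lemma ent_le_determined T U (X : Omega -> T) (Y : Omega -> U) :
  determines P Y X -> H X <= H Y.
Proof.
move=> dYX; have := cmi_ge0 Y Y X; rewrite /cmi.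
have eYYX : H (jointRV (jointRV Y Y) X) = H (jointRV Y X) by apply: ent_equiv; determined.
have eYX : H (jointRV Y X) = H Y by apply: ent_equiv; determined.
by rewrite eYYX eYX; lra.
Qed.

Lemma cent_ge0 T U (X : Omega -> T) (Y : Omega -> U) : 0 <= cent P q X Y.
Proof. by rewrite /cent subr_ge0; apply: ent_le_determined; determined. Qed.

Lemma cent_le_finer T T' V (X : Omega -> T) (X' : Omega -> T') (Z : Omega -> V) :
  determines P X' X -> cent P q X Z <= cent P q X' Z.
Proof. by move=> d; rewrite /cent lerD2r; apply: ent_le_determined; determined. Qed.

Lemma cent_le_coarser T U V (X : Omega -> T) (Y : Omega -> U) (Z : Omega -> V) :
  determines P Y Z -> cent P q X Y <= cent P q X Z.
Proof.
move=> d; have := cmi_ge0 X Y Z; rewrite /cmi /cent.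
rewrite (@ent_equiv _ _ (jointRV Y Z) Y) ?(@ent_equiv _ _ (jointRV (jointRV X Y) Z)
  (jointRV X Y)); try determined; lra.
Qed.

Lemma cent_pair_le T U V (X : Omega -> T) (Y : Omega -> U) (Z : Omega -> V) :
  cent P q (jointRV X Y) Z <= cent P q X Z + cent P q Y Z.
Proof. by have := cmi_ge0 X Y Z; rewrite /cmi /cent; lra. Qed.

Lemma cmi_equiv T T' U U' V V' (X : Omega -> T) (X' : Omega -> T')
    (Y : Omega -> U) (Y' : Omega -> U') (Z : Omega -> V) (Z' : Omega -> V') :
  determines P X X' -> determines P X' X -> determines P Y Y' ->
  determines P Y' Y -> determines P Z Z' -> determines P Z' Z ->
  cmi P q X Y Z = cmi P q X' Y' Z'.
Proof.
move=> dXX' dX'X dYY' dY'Y dZZ' dZ'Z; rewrite /cmi.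
by congr (_ + _ - _ - _); apply: ent_equiv; determined.
Qed.

Lemma cmiC T U V (X : Omega -> T) (Y : Omega -> U) (Z : Omega -> V) :
  cmi P q X Y Z = cmi P q Y X Z.
Proof.
rewrite /cmi (@ent_equiv _ _ (jointRV (jointRV X Y) Z) (jointRV (jointRV Y X) Z));
  try determined; lra.
Qed.

Lemma cmi_chain T1 T2 U V (X1 : Omega -> T1) (X2 : Omega -> T2)
    (Y : Omega -> U) (Z : Omega -> V) :
  cmi P q (jointRV X1 X2) Y Z = cmi P q X1 Y Z + cmi P q X2 Y (jointRV X1 Z).
Proof.
rewrite /cmi (@ent_equiv _ _ (jointRV X2 (jointRV X1 Z)) (jointRV (jointRV X1 X2) Z))
  ?(@ent_equiv _ _ (jointRV Y (jointRV X1 Z)) (jointRV (jointRV X1 Y) Z))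
  ?(@ent_equiv _ _ (jointRV (jointRV X2 Y) (jointRV X1 Z))
                   (jointRV (jointRV (jointRV X1 X2) Y) Z)); try determined; ring.
Qed.

Lemma cmi_le_finer_r T U U' V (X : Omega -> T) (Y : Omega -> U) (Y' : Omega -> U')
    (Z : Omega -> V) :
  determines P Y Y' -> cmi P q X Y' Z <= cmi P q X Y Z.
Proof.
move=> d; have e : cmi P q Y X Z = cmi P q (jointRV Y' Y) X Z.
  by apply: cmi_equiv; determined.
by rewrite cmiC [leRHS]cmiC e cmi_chain lerDl cmi_ge0.
Qed.

Lemma cmi_le_finer_l T T' U V (X : Omega -> T) (X' : Omega -> T') (Y : Omega -> U)
    (Z : Omega -> V) :
  determines P X X' -> cmi P q X' Y Z <= cmi P q X Y Z.
Proof. by move=> d; rewrite cmiC [leRHS]cmiC; apply: cmi_le_finer_r. Qed.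

Lemma mi_le_finer T T' U U' (X : Omega -> T) (X' : Omega -> T') (Y : Omega -> U)
    (Y' : Omega -> U') :
  determines P X X' -> determines P Y Y' -> mi P q X' Y' <= mi P q X Y.
Proof.
move=> dX dY; rewrite !mi_cmi.
exact: le_trans (cmi_le_finer_l _ _ dX) (cmi_le_finer_r _ _ dY).
Qed.

Lemma cmi_le_mi T U V (X : Omega -> T) (Y : Omega -> U) (Z : Omega -> V) :
  cmi P q X Y Z <= mi P q (jointRV X Z) Y.
Proof.
have := mi_ge0 Z Y; rewrite /cmi /mi.
rewrite (@ent_equiv _ _ (jointRV (jointRV X Z) Y) (jointRV (jointRV X Y) Z))
  ?(@ent_equiv _ _ (jointRV Z Y) (jointRV Y Z)); try determined; lra.
Qed.

Lemma cmi_add_determined T U V (TB : finType) (X : Omega -> T) (Y : Omega -> U)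
    (Z : Omega -> V) (B : Omega -> TB) :
  determines P (jointRV (jointRV X Y) Z) B ->
  cmi P q X (jointRV Y B) Z = cmi P q X Y Z + cent P q B (jointRV Y Z).
Proof.
move=> d; rewrite /cmi /cent.
rewrite (@ent_equiv _ _ (jointRV (jointRV Y B) Z) (jointRV B (jointRV Y Z)))
  ?(@ent_equiv _ _ (jointRV (jointRV X (jointRV Y B)) Z) (jointRV (jointRV X Y) Z));
  try determined; ring.
Qed.

Lemma cent_eq_cmi T T' U (X : Omega -> T) (X' : Omega -> T') (Y : Omega -> U) :
  determines P (jointRV X' Y) X -> cent P q X Y = cmi P q X X' Y.
Proof.
move=> d; rewrite /cent /cmi.
by rewrite (@ent_equiv _ _ (jointRV (jointRV X X') Y) (jointRV X' Y)); try determined;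
  ring.
Qed.

Lemma cent_sub_le_cmi T U V (X : Omega -> T) (Y : Omega -> U) (Z : Omega -> V) :
  cent P q X Z - cent P q X Y <= cmi P q X Y Z.
Proof.
have : cent P q X (jointRV Y Z) <= cent P q X Y by apply: cent_le_coarser; determined.
rewrite /cent /cmi (@ent_equiv _ _ (jointRV X (jointRV Y Z)) (jointRV (jointRV X Y) Z));
  try determined; lra.
Qed.

Lemma cent_family_le (I V TA : finType) (A : I -> Omega -> TA) (Z : Omega -> V) :
  cent P q (fun w => [ffun i => A i w]) Z <= \sum_i cent P q (A i) Z.
Proof.
pose Xs (s : seq I) w := [ffun i => if i \in s then Some (A i w) else None].
have partial s : cent P q (Xs s) Z <= \sum_(i <- s) cent P q (A i) Z.
  elim: s => [|i s IH].
    have d0 : determines P Z (Xs [::]).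
      by move=> w w' _ _ _; apply/ffunP => i; rewrite !ffunE.
    by rewrite big_nil /cent (@ent_equiv _ _ (jointRV (Xs [::]) Z) Z) ?subrr;
      try determined.
  have d : determines P (jointRV (A i) (Xs s)) (Xs (i :: s)).
    move=> w w' _ _ [ei es]; apply/ffunP => j; rewrite !ffunE in_cons.
    have [->|_] /= := eqVneq j i; first by rewrite ei.
    by move/ffunP/(_ j): es; rewrite !ffunE.
  rewrite big_cons; apply: le_trans (cent_le_finer Z d) _.
  by apply: le_trans (cent_pair_le _ _ _) _; rewrite lerD2l.
have d : determines P (Xs (index_enum I)) (fun w => [ffun i => A i w]).
  move=> w w' _ _ e; apply/ffunP => i; rewrite !ffunE.
  by move/ffunP/(_ i): e; rewrite !ffunE mem_index_enum => -[].
exact: le_trans (cent_le_finer Z d) (partial _).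
Qed.

Lemma cent0_determines T U (X : Omega -> T) (Y : Omega -> U) :
  cent P q X Y = 0 -> determines P Y X.
Proof.
have split w : pr Y (Y w) = pr (jointRV X Y) (jointRV X Y w) +
    \sum_(w' | (Y w' == Y w) && (X w' != X w)) P w'.
  rewrite /Defs.pr (bigID (fun w' => X w' == X w)) /=; congr (_ + _).
  by apply: eq_bigl => w'; rewrite /jointRV xpair_eqE andbC.
rewrite /cent !ent_expect.
set S1 := \sum_w _ * ln (pr (jointRV X Y) _); set S2 := \sum_w _ * ln (pr Y _).
have -> : - S1 / ln q%:R - - S2 / ln q%:R = (S2 - S1) / ln q%:R by ring.
move=> /eqP; rewrite mulf_eq0 invr_eq0 (negbTE (lt0r_neq0 lnq_gt0)) orbF subr_eq0.
move=> /eqP eS.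
have gap w : 0 <= P w * (ln (pr Y (Y w)) - ln (pr (jointRV X Y) (jointRV X Y w))).
  have [->|Pw] := eqVneq (P w) 0; first by rewrite mul0r.
  rewrite mulr_ge0 // subr_ge0 ler_ln ?posrE ?pr_gt0 // (split w) lerDl.
  exact: sumr_ge0.
have e : \sum_w P w * (ln (pr Y (Y w)) - ln (pr (jointRV X Y) (jointRV X Y w))) = 0.
  transitivity (S2 - S1); last by rewrite eS subrr.
  by rewrite /S1 /S2 -sumrB; apply: eq_bigr => w _; rewrite mulrBr.
move=> w w' Pw Pw' eY; apply/eqP; apply: contraT => nX.
move/(psumr_eq0P (fun w _ => gap w)): e => /(_ w isT) /eqP.
rewrite mulf_eq0 (negbTE Pw) /= subr_eq0 => /eqP /ln_inj.
rewrite !posrE !pr_gt0 // => /(_ isT isT) /eqP.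
rewrite (split w) -subr_eq0 addrC addKr => /eqP rest0.
have := psumr_eq0P (fun w'' _ => P_ge0 w'') rest0 (i := w').
by rewrite eY eqxx eq_sym nX => /(_ isT) /eqP; rewrite (negbTE Pw').
Qed.

Lemma ent_le_log_card T (X : Omega -> T) (e : nat) :
  #|T| = (q ^ e)%N -> H X <= e%:R.
Proof.
move=> cT; set n : R := (q ^ e)%:R.
have n0 : 0 < n by rewrite ltr0n expn_gt0 (ltn_trans _ q_gt1).
have lnn : ln n = e%:R * ln q%:R.
  by rewrite /n natrX lnXn ?ltr0n ?(ltn_trans _ q_gt1) // mulr_natl.
rewrite /ent ler_pdivrMr ?lnq_gt0 // -lnn.
suff : \sum_y (- (pr X y * ln (pr X y)) - pr X y * ln n) <= 0.
  by rewrite big_split /= !sumrN -big_distrl /= pr_sum1 mul1r; lra.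
apply: (@le_trans _ _ (\sum_(y : T) (n^-1 - pr X y))); last first.
  by rewrite sumrB pr_sum1 sumr_const cT -mulr_natl -/n mulfV ?subrr // lt0r_neq0.
apply: ler_sum => y _.
have [->|py] := eqVneq (pr X y) 0; first by rewrite !mul0r !oppr0 !addr0 invr_ge0 ltW.
have p0 : 0 < pr X y by rewrite lt_def py pr_ge0.
have := @ln_le_subr1 ((n * pr X y)^-1); rewrite invr_gt0 mulr_gt0 // => /(_ isT).
rewrite lnV ?posrE ?mulr_gt0 // lnM ?posrE // => h.
have := ler_wpM2l (ltW p0) h.
have -> : pr X y * ((n * pr X y)^-1 - 1) = n^-1 - pr X y.
  by field; rewrite py lt0r_neq0.
by rewrite mulrN mulrDr; lra.
Qed.

Lemma ent_uniform T (X : Omega -> T) (e : nat) :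
  #|T| = (q ^ e)%N -> (forall x, pr X x = 1 / (q ^ e)%:R) -> H X = e%:R.
Proof.
move=> cT hp; set n : R := (q ^ e)%:R.
have n0 : 0 < n by rewrite ltr0n expn_gt0 (ltn_trans _ q_gt1).
have lnn : ln n = e%:R * ln q%:R.
  by rewrite /n natrX lnXn ?ltr0n ?(ltn_trans _ q_gt1) // mulr_natl.
rewrite /ent; under eq_bigr do rewrite hp.
rewrite sumr_const cT.
have -> : (1 / (q ^ e)%:R * ln (1 / (q ^ e)%:R)) *+ (q ^ e)%N = - ln n :> R.
  rewrite -mulr_natl -/n div1r lnV ?posrE // mulrA mulfV ?mul1r //.
  exact: lt0r_neq0.
by rewrite opprK lnn mulfK //; exact: lt0r_neq0 lnq_gt0.
Qed.

Lemma ent_same_law T V (V1 V2 : Omega -> V) (f : V -> T) (X1 X2 : Omega -> T) :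
  (forall w, X1 w = f (V1 w)) -> (forall w, X2 w = f (V2 w)) ->
  (forall v, pr V1 v = pr V2 v) -> H X1 = H X2.
Proof.
have pr_comp (X : Omega -> T) (Vr : Omega -> V) u : (forall w, X w = f (Vr w)) ->
    pr X u = \sum_(v | f v == u) pr Vr v.
  move=> e; rewrite /Defs.pr (eq_bigl (fun w => f (Vr w) == u)) => [|w];
    last by rewrite e.
  rewrite (partition_big Vr (fun v => f v == u)) //.
  apply: eq_bigr => v /eqP fv; apply: eq_bigl => w.
  by case: (Vr w =P v) => [->|_]; rewrite ?fv ?eqxx ?andbF.
move=> e1 e2 e; have law u : pr X1 u = pr X2 u.
  by rewrite (pr_comp _ _ u e1) (pr_comp _ _ u e2); apply: eq_bigr => v _; rewrite e.
by rewrite /ent; congr (- _ / _); apply: eq_bigr => u _; rewrite law.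
Qed.

Lemma cmi_strategy_useless (TM TF TS TQ TA : finType) (Msg : Omega -> TM)
    (F : Omega -> TF) (Sr : Omega -> TS) (Qr : Omega -> TQ) (Ar : Omega -> TA) :
  mi P q Msg (jointRV F Sr) = 0 -> determines P F Qr ->
  determines P (jointRV (jointRV Qr Msg) Sr) Ar ->
  cmi P q Msg F (jointRV (jointRV Qr Ar) Sr) = 0.
Proof.
move=> indep dQ dA; apply/eqP; rewrite eq_le cmi_ge0 andbT.
have eMFY : H (jointRV (jointRV Msg F) (jointRV (jointRV Qr Ar) Sr))
           = H (jointRV Msg (jointRV F Sr)) by apply: ent_equiv; determined.
have eMY : H (jointRV Msg (jointRV (jointRV Qr Ar) Sr)) = H (jointRV Msg (jointRV Qr Sr)).
  by apply: ent_equiv; determined.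
have eFC : H (jointRV F (jointRV Qr Sr)) = H (jointRV F Sr).
  by apply: ent_equiv; determined.
have hFY : cent P q F (jointRV (jointRV Qr Ar) Sr) <= cent P q F (jointRV Qr Sr).
  by apply: cent_le_coarser; determined.
have hMC := mi_ge0 Msg (jointRV Qr Sr).
by move: indep hFY hMC; rewrite /cmi /cent /mi eMFY eMY eFC; lra.
Qed.

Section Messages.
Variables (Fq : finFieldType) (K L : nat) (W : nat -> Omega -> {ffun 'I_L -> Fq}).
Hypothesis q_card : q = #|Fq|.
Hypothesis Wall_uniform : forall x, pr (Wall K W) x = 1 / (q ^ (K * L))%:R.

Local Notation Wsub := (Wsub K W).
Local Notation Wall := (Wall K W).

Definition block (lo hi : nat) (x : {ffun 'I_K -> msgT Fq L}) :
  {ffun 'I_K -> option (msgT Fq L)} :=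
  [ffun i : 'I_K => if (lo <= i.+1 <= hi)%N then Some (x i) else None].

Lemma Wsub_block lo hi w : Wsub lo hi w = block lo hi (Wall w).
Proof. by apply/ffunP => i; rewrite !ffunE. Qed.

Lemma Wsub_eq_at lo hi w w' (i : 'I_K) :
  Wsub lo hi w = Wsub lo hi w' -> (lo <= i.+1 <= hi)%N -> W i.+1 w = W i.+1 w'.
Proof. by move=> /ffunP/(_ i); rewrite !ffunE => + c; rewrite c => -[]. Qed.

Lemma determines_Wall_Wsub lo hi : determines P Wall (Wsub lo hi).
Proof.
move=> w w' _ _ /ffunP e; apply/ffunP => i; rewrite !ffunE.
by move: (e i); rewrite !ffunE => ->.
Qed.

Lemma determines_Wsub_Wall : determines P (Wsub 1 K) Wall.
Proof.
move=> w w' _ _ e; apply/ffunP => i; rewrite !ffunE.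
by apply: (Wsub_eq_at e); rewrite ltn_ord.
Qed.

Lemma determines_Wsub_W lo hi j : (lo <= j <= hi)%N -> (0 < j <= K)%N ->
  determines P (Wsub lo hi) (W j).
Proof.
move=> j_in /andP [j_gt0 j_le] w w' _ _ e.
have j_lt : (j.-1 < K)%N by rewrite prednK.
by have := Wsub_eq_at (i := Ordinal j_lt) e; rewrite /= prednK //; apply.
Qed.

Lemma determines_W_Wsub j : determines P (W j) (Wsub j j).
Proof.
move=> w w' _ _ e; apply/ffunP => i; rewrite !ffunE.
case: ifP => // /andP [h1 h2].
have -> : i.+1 = j by apply/eqP; rewrite eqn_leq h2 h1.
by rewrite e.
Qed.

Lemma determines_Wsub_sub lo hi lo' hi' : (lo' <= lo)%N -> (hi <= hi')%N ->
  determines P (Wsub lo' hi') (Wsub lo hi).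
Proof.
move=> lo_ge hi_le w w' _ _ e; apply/ffunP => i; rewrite !ffunE.
case: ifP => // /andP [h1 h2]; congr Some; apply: (Wsub_eq_at e).
by rewrite (leq_trans lo_ge h1) (leq_trans h2 hi_le).
Qed.

Lemma determines_Wsub_cat lo mid hi :
  determines P (jointRV (Wsub lo mid) (Wsub mid.+1 hi)) (Wsub lo hi).
Proof.
move=> w w' _ _ [e1 e2]; apply/ffunP => i; rewrite !ffunE.
case: ifP => // /andP [lo_i i_hi]; congr Some.
by case: (leqP i.+1 mid) => h; [apply: (Wsub_eq_at e1) | apply: (Wsub_eq_at e2)];
  rewrite ?lo_i ?i_hi ?h.
Qed.

Lemma blocks_determine_Wall j : (0 < j)%N ->
  determines P (jointRV (Wsub j K) (Wsub 1 j.-1)) Wall.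
Proof.
move=> j_gt0; have := determines_Wsub_cat (lo := 1) (mid := j.-1) (hi := K).
rewrite prednK // => cat.
have WsubWall := determines_Wsub_Wall; determined.
Qed.

Lemma determines_Wsub_snoc lo hi :
  determines P (jointRV (Wsub lo hi) (W hi.+1)) (Wsub lo hi.+1).
Proof.
have cat := determines_Wsub_cat (lo := lo) (mid := hi) (hi := hi.+1).
have single := determines_W_Wsub (j := hi.+1); determined.
Qed.

Lemma ent_W j : H (W j) <= L%:R.
Proof. by apply: ent_le_log_card; rewrite card_ffun card_ord q_card. Qed.

Lemma ent_Wsub_le lo hi : H (Wsub lo hi) <= ((hi.+1 - lo) * L)%:R.
Proof.
elim: hi => [|hi IH].
  rewrite ent_constant ?ler0n // => w w'; apply/ffunP => i.
  by rewrite !ffunE ltn0 andbF.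
have [lo_le|lo_gt] := leqP lo hi.+1; last first.
  rewrite ent_constant ?ler0n // => w w'; apply/ffunP => i; rewrite !ffunE.
  by case: ifP => // /andP [h1 h2]; move: (leq_trans h1 h2); rewrite leqNgt lo_gt.
apply: le_trans (ent_le_determined (determines_Wsub_snoc (lo := lo) (hi := hi))) _.
apply: le_trans (_ : H (Wsub lo hi) + H (W hi.+1) <= _).
  by have := mi_ge0 (Wsub lo hi) (W hi.+1); rewrite /mi; lra.
by rewrite subSn // mulSn natrD addrC lerD ?ent_W.
Qed.

Lemma ent_Wall : H Wall = (K * L)%:R.
Proof.
apply: ent_uniform => //.
by rewrite card_ffun card_ffun !card_ord -expnM mulnC q_card.
Qed.

Lemma cent_new_message j : (0 < j <= K)%N -> L%:R <= cent P q (W j) (Wsub 1 j.-1).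
Proof.
move=> /andP [j_gt0 j_le].
have snoc : determines P (jointRV (Wsub 1 j.-1) (W j)) (Wsub 1 j).
  by have := determines_Wsub_snoc (lo := 1) (hi := j.-1); rewrite prednK.
have catr := determines_Wsub_cat (lo := 1) (mid := j) (hi := K).
have WsubWall := determines_Wsub_Wall.
have up_to_j : H (Wsub 1 j) <= H (jointRV (W j) (Wsub 1 j.-1)).
  by apply: ent_le_determined; determined.
have all_blocks : H Wall <= H (jointRV (Wsub 1 j) (Wsub j.+1 K)).
  by apply: ent_le_determined; determined.
have subadd := mi_ge0 (Wsub 1 j) (Wsub j.+1 K).
have after := ent_Wsub_le j.+1 K; have before := ent_Wsub_le 1 j.-1.
rewrite subSS in after; rewrite prednK // subn1 /= in before.
have total : (K * L)%:R = ((K - j) * L)%:R + (j.-1 * L)%:R + L%:R :> R.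
  rewrite -!natrD -mulnDl -{3}(mul1n L) -mulnDl; congr (_ * _)%:R%N; lia.
move: all_blocks subadd; rewrite /cent /mi ent_Wall total; lra.
Qed.

Lemma cmi_chain_messages j (U : finType) (Y : Omega -> U) : (0 < j <= K)%N ->
  cmi P q (Wsub j K) Y (Wsub 1 j.-1)
  = cmi P q (W j) Y (Wsub 1 j.-1) + cmi P q (Wsub j.+1 K) Y (Wsub 1 j).
Proof.
move=> /andP [j_gt0 j_le].
have snoc : determines P (jointRV (Wsub 1 j.-1) (W j)) (Wsub 1 j).
  by have := determines_Wsub_snoc (lo := 1) (hi := j.-1); rewrite prednK.
have catr := determines_Wsub_cat (lo := j) (mid := j) (hi := K).
have single := determines_W_Wsub (j := j).
have headK : determines P (Wsub j K) (W j).
  by apply: determines_Wsub_W; rewrite ?leqnn ?j_gt0.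
have head1 : determines P (Wsub 1 j) (W j).
  by apply: determines_Wsub_W; rewrite ?leqnn ?j_gt0.
have tailK := @determines_Wsub_sub j.+1 K j K (leqnSn j) (leqnn K).
have init1 := @determines_Wsub_sub 1 j.-1 1 j (leqnn 1) (leq_pred j).
rewrite (@cmi_equiv _ _ _ _ _ _ (Wsub j K) (jointRV (W j) (Wsub j.+1 K)) Y Y
  (Wsub 1 j.-1) (Wsub 1 j.-1)); try determined.
by rewrite cmi_chain; congr (_ + _); apply: cmi_equiv; determined.
Qed.

Section Scheme.
Variables (S QT AT FT : finType) (N M : nat) (RS : Omega -> {ffun 'I_M -> S})
  (Fr : Omega -> FT) (Q : nat -> {set 'I_M} -> 'I_N -> Omega -> QT)
  (A : nat -> {set 'I_M} -> 'I_N -> Omega -> AT) (k : nat) (T T' : {set 'I_M}).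
(* A scheme with N databases, retrieving message k-1 with user randomness T
   and message k with user randomness T'. *)
Hypotheses (N_gt0 : (0 < N)%N) (k_gt1 : (1 < k)%N) (k_le : (k <= K)%N).
Hypothesis messages_indep_all : mi P q Wall (jointRV (jointRV Fr RS) (RU RS T')) = 0.
Hypothesis queries_from_strategy : cent P q (Qall Q k T') Fr = 0.
Hypothesis answers_from_data :
  forall n, cent P q (A k T' n) (jointRV (jointRV (Q k T' n) Wall) RS) = 0.
Hypothesis decodability :
  cent P q (W k) (jointRV (jointRV Fr (Aall A k T')) (RU RS T')) = 0.
Hypothesis privacy : forall n x,
  pr (jointRV (jointRV (jointRV (Q k.-1 T n) (A k.-1 T n)) Wall) RS) x
  = pr (jointRV (jointRV (jointRV (Q k T' n) (A k T' n)) Wall) RS) x.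

Local Notation Wbefore := (Wsub 1 k.-1).
Local Notation Wfrom := (Wsub k K).
Local Notation Wupto := (Wsub 1 k).
Local Notation Wafter := (Wsub k.+1 K).
Local Notation Yprev := (jointRV (jointRV (Qall Q k.-1 T) (Aall A k.-1 T)) RS).
Local Notation Ycur := (jointRV (jointRV (Qall Q k T') (Aall A k T')) RS).
Local Notation Yprev_at n := (jointRV (jointRV (Q k.-1 T n) (A k.-1 T n)) RS).
Local Notation Ycur_at n := (jointRV (jointRV (Q k T' n) (A k T' n)) RS).
Local Notation Ccur := (jointRV (Qall Q k T') RS).

Let k_gt0 : (0 < k)%N. Proof. exact: ltn_trans k_gt1. Qed.
Let k_range : (0 < k <= K)%N. Proof. by rewrite k_gt0 k_le. Qed.

Lemma determines_Qall_Q j (TU : {set 'I_M}) (n : 'I_N) :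
  determines P (Qall Q j TU) (Q j TU n).
Proof. by move=> w w' _ _ /ffunP /(_ n); rewrite !ffunE. Qed.

Lemma determines_Aall_A j (TU : {set 'I_M}) (n : 'I_N) :
  determines P (Aall A j TU) (A j TU n).
Proof. by move=> w w' _ _ /ffunP /(_ n); rewrite !ffunE. Qed.

Lemma messages_indep : mi P q Wall (jointRV Fr RS) = 0.
Proof.
apply/eqP; rewrite eq_le mi_ge0 andbT -messages_indep_all.
by apply: mi_le_finer; determined.
Qed.

Lemma answers_determined :
  determines P (jointRV (jointRV (Qall Q k T') Wall) RS) (Aall A k T').
Proof.
move=> w w' Pw Pw' [eQ eW eS]; apply/ffunP => n; rewrite !ffunE.
apply: (cent0_determines (answers_from_data n)) => //.
by move/ffunP/(_ n): eQ; rewrite !ffunE /jointRV => ->; rewrite eW eS.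
Qed.

(* The desired message can be decoded from (Q, A, R_S) alone: the strategy is
   useless once the transcript is known, and R_U is part of R_S. *)
Lemma message_decoded : cent P q (W k) Ycur = 0.
Proof.
have dQ := cent0_determines queries_from_strategy.
have dA := answers_determined.
have dW := cent0_determines decodability.
have dRU : determines P RS (RU RS T') by move=> w w' _ _ e; rewrite /RU e.
have dWk : determines P Wall (W k).
  apply: determines_trans (determines_Wall_Wsub 1 K) _.
  by apply: determines_Wsub_W; rewrite ?k_gt0 ?k_le.
apply/eqP; rewrite eq_le cent_ge0 andbT (cent_eq_cmi (X' := Fr)); last by determined.
rewrite -(cmi_strategy_useless messages_indep dQ dA).
exact: cmi_le_finer_l.
Qed.

Lemma message_revealed : L%:R <= cmi P q (W k) Ycur Wbefore.
Proof.
apply: le_trans (cent_sub_le_cmi _ _ _).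
by rewrite message_decoded subr0 cent_new_message // k_gt0.
Qed.

Lemma privacy_cmi n :
  cmi P q Wfrom (Yprev_at n) Wbefore = cmi P q Wfrom (Ycur_at n) Wbefore.
Proof.
have same_law (TX : finType) (g : _ -> TX) (X1 X2 : Omega -> TX) :
    (forall w, X1 w = g (jointRV (jointRV (jointRV (Q k.-1 T n) (A k.-1 T n))
                                          Wall) RS w)) ->
    (forall w, X2 w = g (jointRV (jointRV (jointRV (Q k T' n) (A k T' n))
                                          Wall) RS w)) ->
    H X1 = H X2.
  by move=> e1 e2; apply: ent_same_law e1 e2 (privacy n).
have e1 : H (jointRV (Yprev_at n) Wbefore) = H (jointRV (Ycur_at n) Wbefore).
  apply: (same_law _ (fun v => (((v.1.1.1, v.1.1.2), v.2), block 1 k.-1 v.1.2)));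
  by move=> w; rewrite /jointRV Wsub_block.
have e2 : H (jointRV (jointRV Wfrom (Yprev_at n)) Wbefore)
        = H (jointRV (jointRV Wfrom (Ycur_at n)) Wbefore).
  apply: (same_law _ (fun v => ((block k K v.1.2, ((v.1.1.1, v.1.1.2), v.2)),
    block 1 k.-1 v.1.2)));
  by move=> w; rewrite /jointRV !Wsub_block.
by rewrite /cmi e1 e2.
Qed.

Lemma answer_ent_le n :
  cent P q (A k T' n) (jointRV Ccur Wbefore) <= cmi P q Wfrom (Ycur_at n) Wbefore.
Proof.
have dA := cent0_determines (answers_from_data n).
have dWall := blocks_determine_Wall k_gt0.
have dQ := determines_Qall_Q (j := k) (TU := T') n.
rewrite (@cmi_equiv _ _ _ _ _ _ Wfrom Wfrom (Ycur_at n)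
  (jointRV (jointRV (Q k T' n) RS) (A k T' n)) Wbefore Wbefore); try determined.
rewrite cmi_add_determined; last by determined.
apply: le_trans (_ : cent P q (A k T' n) (jointRV (jointRV (Q k T' n) RS) Wbefore) <= _).
  by apply: cent_le_coarser; determined.
by rewrite lerDr cmi_ge0.
Qed.

Lemma cmi_le_answers_ent :
  cmi P q Wfrom Ycur Wbefore <= cent P q (Aall A k T') (jointRV Ccur Wbefore).
Proof.
have dA := answers_determined.
have dWall := blocks_determine_Wall k_gt0.
have dQ := cent0_determines queries_from_strategy.
rewrite (@cmi_equiv _ _ _ _ _ _ Wfrom Wfrom Ycur (jointRV Ccur (Aall A k T'))
  Wbefore Wbefore); try determined.
rewrite cmi_add_determined; last by determined.
have : cmi P q Wfrom Ccur Wbefore <= 0.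
  rewrite -messages_indep; apply: le_trans (cmi_le_mi _ _ _) _.
  have dfrom := determines_Wall_Wsub k K; have dbefore := determines_Wall_Wsub 1 k.-1.
  by apply: mi_le_finer; determined.
lra.
Qed.

Lemma main_bound :
  N%:R^-1 * cmi P q Wafter Ycur Wupto + L%:R / N%:R <= cmi P q Wfrom Yprev Wbefore.
Proof.
have per_database n :
    cent P q (A k T' n) (jointRV Ccur Wbefore) <= cmi P q Wfrom Yprev Wbefore.
  apply: le_trans (answer_ent_le n) _; rewrite -privacy_cmi.
  have dQ := determines_Qall_Q (j := k.-1) (TU := T) n.
  have dA := determines_Aall_A (j := k.-1) (TU := T) n.
  by apply: cmi_le_finer_r; determined.
have answers : cent P q (Aall A k T') (jointRV Ccur Wbefore)
               <= N%:R * cmi P q Wfrom Yprev Wbefore.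
  apply: le_trans (cent_family_le (fun n => A k T' n) _) _.
  apply: le_trans (ler_sum _ (fun n _ => per_database n)) _.
  by rewrite sumr_const card_ord mulr_natl.
rewrite [_^-1 * _]mulrC -mulrDl ler_pdivrMr ?ltr0n // mulrC.
apply: le_trans answers; apply: le_trans cmi_le_answers_ent.
rewrite (cmi_chain_messages Ycur k_range) addrC lerD2r.
exact: message_revealed.
Qed.

End Scheme.

End Messages.

End Entropy.

Unset Implicit Arguments.

Theorem lemma2 (R : realType) (Omega : finType) (P : {ffun Omega -> R})
  (Fq : finFieldType) (S QT AT FT : finType) (K L N M m : nat)
  (W : nat -> Omega -> {ffun 'I_L -> Fq}) (RS : Omega -> {ffun 'I_M -> S})
  (Fr : Omega -> FT)
  (Q : nat -> {set 'I_M} -> 'I_N -> Omega -> QT)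
  (A : nat -> {set 'I_M} -> 'I_N -> Omega -> AT)
  (k : nat) (T T' : {set 'I_M}) :
  (1 <= N)%N -> (2 <= K)%N ->
  valid_scheme K W RS Fr Q A P m ->
  (2 <= k <= K)%N -> #|T| = m ->
  (* T' is the user-side randomness R_U' given by (C6) for indices k-1, k *)
  #|T'| = m ->
  ent P #|Fq| (RU RS T') = ent P #|Fq| (RU RS T) ->
  (forall n x,
     pr P (jointRV (jointRV (jointRV (Q k.-1 T n) (A k.-1 T n)) (Wall K W)) RS) x
   = pr P (jointRV (jointRV (jointRV (Q k T' n) (A k T' n)) (Wall K W)) RS) x) ->
  cmi P #|Fq| (Wsub K W k K)
      (jointRV (jointRV (Qall Q k.-1 T) (Aall A k.-1 T)) RS)
      (Wsub K W 1 k.-1)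
  >= N%:R^-1 * cmi P #|Fq| (Wsub K W k.+1 K)
                  (jointRV (jointRV (Qall Q k T') (Aall A k T')) RS)
                  (Wsub K W 1 k)
     + L%:R / N%:R.
Proof.
move=> N_gt0 _ [[P_ge0 P_sum1] [uniform [C1 [_ [C3 [C4 [C5 _]]]]]]]
  /andP [k_gt1 k_le] _ cT' _ privacy.
have k_range : (1 <= k <= K)%N by rewrite k_le (ltnW k_gt1).
exact: (main_bound P_ge0 P_sum1 (card_finNzRing_gt1 Fq) erefl uniform N_gt0 k_gt1 k_le
  (C1 T' cT') (C3 k T' k_range cT') (fun n => C4 k T' n k_range cT')
  (C5 k T' k_range cT') privacy).
Qed.
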